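(* Let $\mathcal{R}=(X,\Phi,\check X,\check\Phi)$ be a semisimple root datum, $\mathcal{T}=(T,\emptyset,\check T,\emptyset)$ a torus, $A$ a finite $\mathbb{Z}$-module, and $h_1:X\to A$, $h_2:T\to A$ surjective homomorphisms with $\Phi\subseteq\ker h_1$. Let $\mathcal{R}'=\mathcal{R}\oplus_{(A,h_1,h_2)}\mathcal{T}=(B,\Phi',\check B,\check\Phi')$ with projections $p_1:B\to X$, $p_2:B\to T$. Then: (a) $\ker(p_1)=\check\Phi'^\perp$, so $p_1$ induces an isomorphism of root data $\mathcal{R}'_{\mathrm{der}}\to\mathcal{R}$; (b) $\ker(p_2)=\Phi'^\top$, so $p_2$ induces an isomorphism of root data $\mathcal{R}'_{\mathrm{rad}}\to\mathcal{T}$; (c) $\ker(h_1\circ p_1)=\ker(h_2\circ p_2)=\Phi'^\top\oplus\check\Phi'^\perp$, so $h_1\circ p_1=h_2\circ p_2$ induces an isomorphism of abelian groups $B/(\Phi'^\top\oplus\check\Phi'^\perp)\to A$.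
   Context: Root data are reduced quadruples $(X,\Phi,\check X,\check\Phi)$ with perfect pairing; a torus is a root datum with no roots; semisimple means $\mathbb{Q}\Phi=\mathbb{Q}\otimes X$. For $S\subseteq X$: $S^\top=\{x\in X: nx\in\mathbb{Z}S$ for some $n>0\}$, $S^\perp=\{y\in\check X:\langle x,y\rangle=0\ \forall x\in S\}$; similarly for subsets of $\check X$. $\mathcal{R}_{\mathrm{rad}}=(X/\Phi^\top,\emptyset,\check\Phi^\perp,\emptyset)$ and $\mathcal{R}_{\mathrm{der}}=(X/\check\Phi^\perp,\Phi,\check\Phi^\top,\check\Phi)$. Induced datum for a submodule $B\supseteq\Phi$: $(B,\Phi,\mathrm{Hom}(B,\mathbb{Z}),\check\iota_B(\check\Phi))$, $\check\iota_B(y)=\langle-,y\rangle|_B$. Central product $\mathcal{R}_1\oplus_{(A,h_1,h_2)}\mathcal{R}_2$ (for surjections $h_i:X_i\to A$ killing roots): the datum induced from the direct sum $\mathcal{R}_1\oplus\mathcal{R}_2$ by $\{(x_1,x_2)\in X_1\oplus X_2:h_1(x_1)=h_2(x_2)\}$. *)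

From HB Require Import structures.
From mathcomp Require Import all_boot all_order all_algebra.
Set Implicit Arguments. Unset Strict Implicit. Unset Printing Implicit Defensive.
Import Order.TTheory GRing.Theory Num.Theory.
Local Open Scope ring_scope.

Definition span_int (V : zmodType) (s : seq V) (x : V) : Prop :=
  exists c : 'I_(size s) -> int, x = \sum_(i < size s) s`_i *~ c i.

(* X is a finitely generated free
   Z-module, Xv is its dual via the perfect pairing rd_pair, the roots Phi and
   coroots Phiv are finite sets given as duplicate-free sequences, and the
   bijection Phi -> Phiv, alpha |-> alpha^v, is given by position. *)
Record rootDatum := RootDatum {
  rd_X : zmodType;
  rd_Xv : zmodType;
  rd_pair : rd_X -> rd_Xv -> int;
  rd_roots : seq rd_X;
  rd_coroots : seq rd_Xv;
  rd_pairDl : forall x1 x2 y, rd_pair (x1 + x2) y = rd_pair x1 y + rd_pair x2 y;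
  rd_pairDr : forall x y1 y2, rd_pair x (y1 + y2) = rd_pair x y1 + rd_pair x y2;
  rd_free : exists n (e : 'I_n -> rd_X),
      (forall x, exists c : 'I_n -> int, x = \sum_(i < n) e i *~ c i) /\
      (forall c : 'I_n -> int, \sum_(i < n) e i *~ c i = 0 -> forall i, c i = 0);
  rd_perfect_l : forall phi : rd_Xv -> int, {morph phi : a b / a + b} ->
      exists! x, forall y, phi y = rd_pair x y;
  rd_perfect_r : forall phi : rd_X -> int, {morph phi : a b / a + b} ->
      exists! y, forall x, phi x = rd_pair x y;
  rd_size : size rd_coroots = size rd_roots;
  rd_uniq : uniq rd_roots;
  rd_uniq_co : uniq rd_coroots;
  rd_two : forall i, (i < size rd_roots)%N ->
      rd_pair rd_roots`_i rd_coroots`_i = 2;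
  rd_refl : forall i j, (i < size rd_roots)%N -> (j < size rd_roots)%N ->
      rd_roots`_j - rd_roots`_i *~ rd_pair rd_roots`_j rd_coroots`_i
        \in rd_roots;
  rd_corefl : forall i j, (i < size rd_roots)%N -> (j < size rd_roots)%N ->
      rd_coroots`_j - rd_coroots`_i *~ rd_pair rd_roots`_i rd_coroots`_j
        \in rd_coroots;
  rd_reduced : forall i j (m n : int), (i < size rd_roots)%N ->
      (j < size rd_roots)%N -> m != 0 ->
      rd_roots`_i *~ m = rd_roots`_j *~ n ->
      rd_roots`_j = rd_roots`_i \/ rd_roots`_j = - rd_roots`_i
}.

(* Semisimple: Q Phi = Q (x) X, i.e. every x has a positive multiple in Z Phi. *)
Definition semisimple (R : rootDatum) : Prop :=
  forall x : rd_X R, exists n : nat, (0 < n)%N /\ span_int (rd_roots R) (x *+ n).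

Definition is_torus (R : rootDatum) : Prop := rd_roots R = [::].

Definition topP (V : zmodType) (B : V -> Prop) (S : seq V) (x : V) : Prop :=
  B x /\ exists n : nat, (0 < n)%N /\ span_int S (x *+ n).

(* F^perp inside B, for F a finite family of functionals on B (elements of
   Hom(B, Z), represented by their values). *)
Definition perpP (V : zmodType) (B : V -> Prop) (F : seq (V -> int)) (x : V)
  : Prop :=
  B x /\ forall i, (i < size F)%N -> nth (fun _ => 0) F i x = 0.

Definition ds_pair (R1 R2 : rootDatum) (b : rd_X R1 * rd_X R2)
  (y : rd_Xv R1 * rd_Xv R2) : int :=
  rd_pair b.1 y.1 + rd_pair b.2 y.2.

Definition ds_roots (R1 R2 : rootDatum) : seq (rd_X R1 * rd_X R2) :=
  [seq (a, 0) | a <- rd_roots R1] ++ [seq (0, b) | b <- rd_roots R2].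

Definition ds_coroots (R1 R2 : rootDatum) : seq (rd_Xv R1 * rd_Xv R2) :=
  [seq (a, 0) | a <- rd_coroots R1] ++ [seq (0, b) | b <- rd_coroots R2].

(* Central product R1 (+)_(A,h1,h2) R2 = datum induced from R1 (+) R2 by
   B = {(x1,x2) | h1 x1 = h2 x2}: lattice B, roots Phi (the direct-sum roots),
   dual Hom(B,Z), coroots iota_B(y) = <-, y>|_B (functionals on B). *)
Definition cp_B (R1 R2 : rootDatum) (A : zmodType)
  (h1 : rd_X R1 -> A) (h2 : rd_X R2 -> A) (b : rd_X R1 * rd_X R2) : Prop :=
  h1 b.1 = h2 b.2.

Definition cp_roots (R1 R2 : rootDatum) : seq (rd_X R1 * rd_X R2) :=
  ds_roots R1 R2.

Definition cp_coroots (R1 R2 : rootDatum) : seq (rd_X R1 * rd_X R2 -> int) :=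
  [seq (fun b => ds_pair b y) | y <- ds_coroots R1 R2].

Definition induces_grp_iso (V A : zmodType) (B K : V -> Prop) (p : V -> A)
  : Prop :=
  [/\ forall a b, B a -> B b -> p (a + b) = p a + p b,
      forall x, exists b, B b /\ p b = x &
      forall b, B b -> (p b = 0 <-> K b)].

(* p induces an isomorphism of root data from (B/K, rootsV, (B/K)^v, corootsV)
   to R: a group isomorphism f : B/K -> X(R) with f(rootsV) = Phi(R) and
   f^v(Phiv(R)) = corootsV (f^v = transpose, y |-> <f(-), y>). *)
Definition induces_rd_iso (V : zmodType) (B K : V -> Prop) (rootsV : seq V)
  (corootsV : seq (V -> int)) (R : rootDatum) (p : V -> rd_X R) : Prop :=
  [/\ induces_grp_iso B K p,
      forall i, (i < size rootsV)%N -> p rootsV`_i \in rd_roots R,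
      forall a, a \in rd_roots R ->
        exists2 i, (i < size rootsV)%N & p rootsV`_i = a,
      forall i, (i < size corootsV)%N ->
        exists2 j, (j < size (rd_coroots R))%N &
          forall b, B b -> nth (fun _ => 0) corootsV i b
                           = rd_pair (p b) (rd_coroots R)`_j &
      forall j, (j < size (rd_coroots R))%N ->
        exists2 i, (i < size corootsV)%N &
          forall b, B b -> nth (fun _ => 0) corootsV i b
                           = rd_pair (p b) (rd_coroots R)`_j].

From HB Require Import structures.
From mathcomp Require Import all_boot all_order all_algebra ring.
Import Order.TTheory GRing.Theory Num.Theory.
Set Implicit Arguments. Unset Strict Implicit.
Local Open Scope ring_scope.

(* The substance of the theorem is that, for a semisimple root datum, an
   element of X orthogonal to all coroots is zero: this identifies the kernel of
   the first projection with the annihilator of the coroots.  To see it, use the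
   integral form (w, v) |-> sum_alpha <alpha, w> <alpha, v> on the dual lattice.
   Since the reflections permute the roots, <alpha, -> is a nonzero multiple of
   (alpha^v, -), so a multiple M x of an element x of Z Phi is represented as
   (w, -) with w in the span of the coroots.  If x is orthogonal to the coroots,
   then (w, w) = M <x, w> = 0, hence w is orthogonal to every root, hence
   M <x, -> = (w, -) = 0 and x = 0.  The rest is bookkeeping: since the
   second factor is a torus, Phi' = Phi x 0 and Phi'^v = <-, Phi^v> o p_1. *)

Section AdditiveMorphism.
Variables (U V : zmodType) (f : U -> V) (fD : {morph f : a b / a + b}).

Lemma additive0 : f 0 = 0.
Proof. by apply: (addrI (f 0)); rewrite -fD !addr0. Qed.

Lemma additiveN a : f (- a) = - f a.
Proof. by apply: (addrI (f a)); rewrite -fD !subrr additive0. Qed.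

Lemma additiveMn a n : f (a *+ n) = f a *+ n.
Proof. by elim: n => [|n IHn]; rewrite ?mulr0n ?additive0 // !mulrS fD IHn. Qed.

Lemma additiveMz a c : f (a *~ c) = f a *~ c.
Proof. by case: c => n; rewrite /intmul ?additiveN additiveMn. Qed.

Lemma additive_sum I (r : seq I) (P : pred I) F :
  f (\sum_(i <- r | P i) F i) = \sum_(i <- r | P i) f (F i).
Proof. exact: (big_morph f fD additive0). Qed.

End AdditiveMorphism.

Section IntegerSpan.
Variable V : zmodType.
Implicit Types (s : seq V) (x y : V).

Lemma span_intP s x :
  span_int s x <-> exists c : nat -> int, x = \sum_(i < size s) s`_i *~ c i.
Proof.
split=> [[c ->]|[c ->]]; last by exists (fun i => c (val i)).
exists (fun n => if insub n is Some i then c i else 0).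
by apply: eq_bigr => i _; rewrite valK.
Qed.

Lemma span_int0 s : span_int s 0.
Proof. by apply/span_intP; exists (fun=> 0); rewrite big1. Qed.

Lemma span_intD s x y : span_int s x -> span_int s y -> span_int s (x + y).
Proof.
move=> /span_intP[c ->] /span_intP[d ->]; apply/span_intP.
by exists (fun i => c i + d i); rewrite -big_split; apply: eq_bigr => i _; rewrite mulrzDr.
Qed.

Lemma span_intMz s x k : span_int s x -> span_int s (x *~ k).
Proof.
move=> /span_intP[c ->]; apply/span_intP; exists (fun i => c i * k).
by rewrite mulrz_suml; apply: eq_bigr => i _; rewrite mulrzA.
Qed.

Lemma span_int_nth s i : (i < size s)%N -> span_int s s`_i.
Proof.
move=> lt_i_s; apply/span_intP; exists (fun j => (j == i)%:Z).
rewrite (bigD1 (Ordinal lt_i_s)) //= eqxx big1 ?addr0 // => j /negbTE neq_ji.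
by rewrite -val_eqE /= in neq_ji; rewrite neq_ji mulr0z.
Qed.

End IntegerSpan.

Lemma span_int_map (V W : zmodType) (f : V -> W) (fD : {morph f : a b / a + b}) s x :
  span_int s x -> span_int (map f s) (f x).
Proof.
move=> /span_intP[c ->]; apply/span_intP; exists c.
rewrite (additive_sum fD) size_map; apply: eq_bigr => i _.
by rewrite (additiveMz fD) (nth_map 0).
Qed.

Lemma span_int_annihilated (V W : zmodType) (f : V -> W)
    (fD : {morph f : a b / a + b}) s x :
  (forall i, (i < size s)%N -> f s`_i = 0) -> span_int s x -> f x = 0.
Proof.
move=> fs0 [c ->]; rewrite (additive_sum fD) big1 // => i _.
by rewrite (additiveMz fD) fs0 ?mul0rz.
Qed.

Section RootDatumPairing.
Variable R : rootDatum.
Local Notation pr := (@rd_pair R).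
Implicit Types (x : rd_X R) (y : rd_Xv R).

Lemma rd_pair0l y : pr 0 y = 0.
Proof. exact: (additive0 (fun a b => rd_pairDl a b y)). Qed.

Lemma rd_pair0r x : pr x 0 = 0.
Proof. exact: (additive0 (rd_pairDr x)). Qed.

Lemma rd_pairBl x1 x2 y : pr (x1 - x2) y = pr x1 y - pr x2 y.
Proof. by rewrite rd_pairDl (additiveN (fun a b => rd_pairDl a b y)). Qed.

Lemma rd_pairMzl x c y : pr (x *~ c) y = pr x y * c.
Proof. by rewrite (additiveMz (fun a b => rd_pairDl a b y)) mulrzz. Qed.

Lemma rd_pairMzr x c y : pr x (y *~ c) = pr x y * c.
Proof. by rewrite (additiveMz (rd_pairDr x)) mulrzz. Qed.

Lemma rd_pairMnl x n y : pr (x *+ n) y = pr x y *+ n.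
Proof. exact: (additiveMn (fun a b => rd_pairDl a b y)). Qed.

Lemma rd_pair_eq0l x : (forall y, pr x y = 0) -> x = 0.
Proof.
move=> x0.
have [x' [_ x'_uniq]] := @rd_perfect_l R (fun=> 0) (fun _ _ => esym (addr0 0)).
rewrite -(x'_uniq x (fun y => esym (x0 y))); apply: x'_uniq => y.
by rewrite rd_pair0l.
Qed.

Lemma rd_X_torsionfree x n : (0 < n)%N -> x *+ n = 0 -> x = 0.
Proof.
move=> n_gt0 nx0; apply: rd_pair_eq0l => y.
have /eqP := rd_pair0l y; rewrite -nx0 rd_pairMnl mulrn_eq0.
by rewrite eqn0Ngt n_gt0 => /eqP.
Qed.

End RootDatumPairing.

Section RootForm.
Variable R : rootDatum.
Local Notation pr := (@rd_pair R).
Local Notation roots := (rd_roots R).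
Local Notation coroots := (rd_coroots R).
Implicit Types (w v : rd_Xv R).

Definition root_form (w v : rd_Xv R) : int :=
  \sum_(a <- roots) pr a w * pr a v.

Lemma root_form0l v : root_form 0 v = 0.
Proof. by rewrite /root_form big1 // => a _; rewrite rd_pair0r mul0r. Qed.

Lemma root_formDl w1 w2 v : root_form (w1 + w2) v = root_form w1 v + root_form w2 v.
Proof. by rewrite /root_form -big_split; apply: eq_bigr => a _; rewrite rd_pairDr mulrDl. Qed.

Lemma root_formMzl w k v : root_form (w *~ k) v = root_form w v * k.
Proof. by rewrite /root_form mulr_suml; apply: eq_bigr => a _; rewrite rd_pairMzr; ring. Qed.

Lemma root_form_coroot_gt0 i : (i < size roots)%N ->
  0 < root_form coroots`_i coroots`_i.
Proof.
move=> lt_i; rewrite /root_form (bigD1_seq roots`_i) ?mem_nth ?rd_uniq //=.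
rewrite rd_two // ltr_wpDr //; by apply: sumr_ge0 => a _; rewrite -expr2 sqr_ge0.
Qed.

Lemma root_form_eq0 w : root_form w w = 0 -> forall a, a \in roots -> pr a w = 0.
Proof.
move=> /eqP; rewrite psumr_eq0 => [/allP waw0 a /waw0|a _]; last by rewrite -expr2 sqr_ge0.
by rewrite mulf_eq0 orbb => /eqP.
Qed.

(* Reindex root_form by the reflection s_alpha, an involution of the roots. *)
Lemma root_form_coroot i v : (i < size roots)%N ->
  2 * root_form coroots`_i v = pr roots`_i v * root_form coroots`_i coroots`_i.
Proof.
move=> lt_i; set a := roots`_i; set av := coroots`_i.
pose s b := b - a *~ pr b av.
have aav : pr a av = 2 by exact: rd_two.
have prs b y : pr (s b) y = pr b y - pr a y * pr b av by rewrite rd_pairBl rd_pairMzl.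
have sK : involutive s.
  move=> b; rewrite {1}/s prs aav /s -addrA -opprD -mulrzDr.
  have -> : pr b av + (pr b av - 2 * pr b av) = 0 by ring.
  by rewrite mulr0z subr0.
have s_roots : perm_eq roots (map s roots).
  apply: uniq_perm; rewrite ?(map_inj_uniq (inv_inj sK)) ?rd_uniq // => x.
  have s_root b : b \in roots -> s b \in roots.
    by move=> /(nthP 0)[j lt_j <-]; exact: rd_refl.
  apply/idP/mapP=> [x_root|[y y_root ->]]; last exact: s_root.
  by exists (s x); rewrite ?sK ?s_root.
have reindexed : root_form av v =
    \sum_(b <- roots) (pr a v * (pr b av * pr b av) - pr b av * pr b v).
  rewrite /root_form (perm_big _ s_roots) big_map.
  by apply: eq_bigr => b _; rewrite !prs aav; ring.
have -> : 2 * root_form av v = root_form av v + root_form av v by ring.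
rewrite {2}reindexed /root_form -big_split mulr_sumr.
by apply: eq_bigr => b _ /=; ring.
Qed.

Lemma span_roots_root_form y : span_int roots y ->
  exists2 M : int, M != 0 &
    exists2 w, span_int coroots w & forall v, pr y v * M = root_form w v.
Proof.
move=> [c ->]; elim/big_ind: _.
- exists 1 => //; exists 0; first exact: span_int0.
  by move=> v; rewrite rd_pair0l mul0r root_form0l.
- move=> y1 y2 [M1 M1_neq0 [w1 w1_span y1w1]] [M2 M2_neq0 [w2 w2_span y2w2]].
  exists (M1 * M2); first by rewrite mulf_neq0.
  exists (w1 *~ M2 + w2 *~ M1); first by apply: span_intD; apply: span_intMz.
  by move=> v; rewrite root_formDl !root_formMzl -y1w1 -y2w2 rd_pairDl; ring.
- move=> [i lt_i] _ /=; exists (root_form coroots`_i coroots`_i).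
    by rewrite gt_eqF ?root_form_coroot_gt0.
  exists (coroots`_i *~ (2 * c (Ordinal lt_i))).
    by apply/span_intMz/span_int_nth; rewrite rd_size.
  move=> v; rewrite rd_pairMzl root_formMzl mulrCA mulrA root_form_coroot //; ring.
Qed.

End RootForm.

Lemma semisimple_perp_coroots (R : rootDatum) (x : rd_X R) :
  semisimple R ->
  (forall j, (j < size (rd_coroots R))%N -> rd_pair x (rd_coroots R)`_j = 0) ->
  x = 0.
Proof.
move=> ssR x_perp; have [n [n_gt0 nx_span]] := ssR x.
have [M M_neq0 [w w_span nxw]] := span_roots_root_form nx_span.
have nx_w : rd_pair (x *+ n) w = 0.
  apply: (span_int_annihilated (rd_pairDr _) _ w_span) => j lt_j.
  by rewrite rd_pairMnl x_perp ?mul0rn.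
have w_roots : forall a, a \in rd_roots R -> rd_pair a w = 0.
  by apply: root_form_eq0; rewrite -nxw nx_w mul0r.
apply: (rd_X_torsionfree n_gt0); apply: rd_pair_eq0l => v.
apply/eqP; suff : rd_pair (x *+ n) v * M == 0.
  by rewrite mulf_eq0 (negbTE M_neq0) orbF.
by rewrite nxw /root_form big1_seq // => a /andP[_ /w_roots ->]; rewrite mul0r.
Qed.

Section CentralProductWithTorus.
Variables (R T : rootDatum) (A : zmodType) (h1 : rd_X R -> A) (h2 : rd_X T -> A).
Hypotheses (ssR : semisimple R) (torusT : is_torus T).
Hypotheses (h1D : {morph h1 : x y / x + y}) (h2D : {morph h2 : x y / x + y}).
Hypotheses (h1_surj : forall a, exists x, h1 x = a) (h2_surj : forall a, exists t, h2 t = a).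

Local Notation B := (cp_B h1 h2).
Local Notation Ktop := (topP B (cp_roots R T)).
Local Notation Kperp := (perpP B (cp_coroots R T)).

Lemma torus_coroots : rd_coroots T = [::].
Proof. by apply/nilP; rewrite /nilp rd_size torusT. Qed.

Lemma cp_roots_torus : cp_roots R T = [seq (a, 0) | a <- rd_roots R].
Proof. by rewrite /cp_roots /ds_roots torusT cats0. Qed.

Lemma size_cp_coroots_torus : size (cp_coroots R T) = size (rd_coroots R).
Proof. by rewrite size_map /ds_coroots torus_coroots cats0 size_map. Qed.

Lemma nth_cp_coroots_torus i b : (i < size (rd_coroots R))%N ->
  nth (fun=> 0) (cp_coroots R T) i b = rd_pair b.1 (rd_coroots R)`_i.
Proof.
move=> lt_i; rewrite /cp_coroots /ds_coroots torus_coroots cats0.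
by rewrite (nth_map (0, 0)) ?size_map // (nth_map 0) // /ds_pair rd_pair0r addr0.
Qed.

Lemma cp_fst_eq0 b : B b -> (b.1 = 0 <-> Kperp b).
Proof.
move=> Bb; split=> [b1_0|[_ b_perp]].
  split=> // i; rewrite size_cp_coroots_torus => lt_i.
  by rewrite nth_cp_coroots_torus ?b1_0 ?rd_pair0l.
apply: semisimple_perp_coroots => // j lt_j; rewrite -nth_cp_coroots_torus //.
by apply: b_perp; rewrite size_cp_coroots_torus.
Qed.

Lemma cp_snd_eq0 b : B b -> (b.2 = 0 <-> Ktop b).
Proof.
have inlD : {morph (fun a : rd_X R => (a, 0 : rd_X T)) : a a' / a + a'}.
  by move=> a a'; rewrite -[RHS]/(a + a', 0 + 0) addr0.
move=> Bb; split=> [b2_0|[_ [n [n_gt0]]]].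
  split=> //; have [n [n_gt0 nb1_span]] := ssR b.1; exists n; split=> //.
  move: Bb nb1_span; case: b b2_0 => x t /= -> _ /(span_int_map inlD).
  by rewrite -(additiveMn inlD) cp_roots_torus.
rewrite cp_roots_torus => /span_intP[c /(congr1 snd)].
rewrite (additiveMn (fun _ _ => erefl)) (additive_sum (fun _ _ => erefl)) big1.
  exact: rd_X_torsionfree.
move=> [i lt_i] _ /=; rewrite (additiveMz (fun _ _ => erefl)).
have lt_i_roots : (i < size (rd_roots R))%N by rewrite size_map in lt_i.
by rewrite (nth_map 0 _ _ lt_i_roots) mul0rz.
Qed.

Lemma cp_fst_rd_iso :
  @induces_rd_iso _ B Kperp (cp_roots R T) (cp_coroots R T) R fst.
Proof.
split.
- split=> // [x|]; last exact: cp_fst_eq0.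
  by have [t ht] := h2_surj (h1 x); exists (x, t).
- move=> i; rewrite cp_roots_torus size_map => lt_i.
  by rewrite (nth_map 0) ?mem_nth.
- move=> a /(nthP 0)[i lt_i <-]; exists i; rewrite cp_roots_torus ?size_map //.
  by rewrite (nth_map 0).
- move=> i; rewrite size_cp_coroots_torus => lt_i; exists i => // b _.
  exact: nth_cp_coroots_torus.
- move=> j lt_j; exists j => [|b _]; first by rewrite size_cp_coroots_torus.
  exact: nth_cp_coroots_torus.
Qed.

Lemma cp_snd_rd_iso : @induces_rd_iso _ B Ktop [::] [::] T snd.
Proof.
split=> //; rewrite ?torusT ?torus_coroots //.
split=> // [t|]; last exact: cp_snd_eq0.
by have [x hx] := h1_surj (h2 t); exists (x, t).
Qed.

Lemma cp_top_perp_eq0 b : Ktop b -> Kperp b -> b = 0.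
Proof.
case: b => x t b_top b_perp.
have /= -> := (cp_snd_eq0 b_top.1).2 b_top.
by have /= -> := (cp_fst_eq0 b_perp.1).2 b_perp.
Qed.

Lemma cp_ker_h1_fst b : B b ->
  (h1 b.1 = 0 <-> exists u v, Ktop u /\ Kperp v /\ b = u + v).
Proof.
have h10 := additive0 h1D; have h20 := additive0 h2D.
case: b => x t Bb; split=> [h1x0|[u [v [u_top [v_perp ->]]]]].
  exists (x, 0), (0, t); split; first by apply/cp_snd_eq0; rewrite // /cp_B h1x0.
  split; first by apply/cp_fst_eq0; rewrite // /cp_B h10 -Bb.
  by rewrite -[RHS]/(x + 0, 0 + t) addr0 add0r.
have [u_B v_B] := (u_top.1, v_perp.1).
rewrite /= h1D (cp_fst_eq0 v_B).2 // h10 addr0 u_B.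
by rewrite (cp_snd_eq0 u_B).2.
Qed.

End CentralProductWithTorus.

Unset Implicit Arguments.

Theorem mainTheorem7 (R T : rootDatum) (A : finZmodType)
  (h1 : rd_X R -> A) (h2 : rd_X T -> A)
  (hR : semisimple R) (hT : is_torus T)
  (h1add : {morph h1 : x y / x + y}) (h2add : {morph h2 : x y / x + y})
  (h1surj : forall a : A, exists x, h1 x = a)
  (h2surj : forall a : A, exists t, h2 t = a)
  (h1Phi : forall a, a \in rd_roots R -> h1 a = 0) :
  let B := cp_B h1 h2 in
  let Phi' := cp_roots R T in
  let Phiv' := cp_coroots R T in
  let Ktop := topP B Phi' in
  let Kperp := perpP B Phiv' in
  (* (a) *)
  ((forall b, B b -> (b.1 = 0 <-> Kperp b)) /\
   @induces_rd_iso _ B Kperp Phi' Phiv' R fst) /\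
  (* (b) *)
  ((forall b, B b -> (b.2 = 0 <-> Ktop b)) /\
   @induces_rd_iso _ B Ktop [::] [::] T snd) /\
  (* (c) *)
  (let Ksum := fun b => exists u v, Ktop u /\ Kperp v /\ b = u + v in
   (forall b, Ktop b -> Kperp b -> b = 0) /\
   (forall b, B b -> (h1 b.1 = 0 <-> Ksum b)) /\
   (forall b, B b -> (h2 b.2 = 0 <-> Ksum b)) /\
   (forall b, B b -> h1 b.1 = h2 b.2) /\
   induces_grp_iso B Ksum (fun b => h1 b.1)).
Proof.
move=> B Phi' Phiv' Ktop Kperp.
have ker_h1 := cp_ker_h1_fst hR hT h1add h2add.
split; first by split; [exact: cp_fst_eq0 | exact: cp_fst_rd_iso].
split; first by split; [exact: cp_snd_eq0 | exact: cp_snd_rd_iso].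
move=> Ksum; split; first exact: cp_top_perp_eq0.
split; first exact: ker_h1.
split; first by move=> b Bb; rewrite -Bb; exact: ker_h1.
split=> //; split=> // [b b' _ _|a]; first exact: h1add.
have [x hx] := h1surj a; have [t ht] := h2surj a.
by exists (x, t); rewrite /B /cp_B hx ht.
Qed.
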